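(* Let $d$ and $m$ be positive integers, let $a_1=(a_{11},\ldots,a_{1k_1}),\ldots,a_m=(a_{m1},\ldots,a_{mk_m})$ be partitions of $d$ of lengths $k_1,\ldots,k_m$, and suppose that $t=k_1+\cdots+k_m-d(m-1)\geq 1$. Then there exist a partition $c=(c_1,\ldots,c_t)$ of $d$ of length $t$ and refinements $r_i:a_i\to c$ ($i=1,\ldots,m$) such that for each $j=1,\ldots,t$, the sum of the lengths of the partitions $r_1^{-1}(c_j),\ldots,r_m^{-1}(c_j)$ of $c_j$ equals $c_j(m-1)+1$.
   Context: A partition of $d$ is a multiset of positive integers summing to $d$; its length is its number of elements. For partitions $a$ and $b$ of $d$, a refinement $r:b\to a$ is a map of multisets such that for each part $a_i$ of $a$, the multiset $r^{-1}(a_i)$ is a partition of $a_i$. *)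

From mathcomp Require Import all_boot.
Set Implicit Arguments. Unset Strict Implicit. Unset Printing Implicit Defensive.

(* A partition of d: a finite multiset of positive integers summing to d,
   represented as a sequence (order irrelevant). Its length is [size s]. *)
Definition is_partition (d : nat) (s : seq nat) : bool :=
  all (fun x => 0 < x) s && (sumn s == d).

(* Parts of [a] (as a multiset, via their indices) sent by r to the j-th part of c:
   this is the multiset r^{-1}(c_j). *)
Definition preimage (a c : seq nat) (r : 'I_(size a) -> 'I_(size c))
  (j : 'I_(size c)) : seq nat :=
  [seq nth 0 a (val k) | k <- enum 'I_(size a) & r k == j].

Definition is_refinement (a c : seq nat) (r : 'I_(size a) -> 'I_(size c)) : Prop :=
  forall j : 'I_(size c), is_partition (nth 0 c j) (preimage r j).

(* Two partitions a, b of d with |a| + |b| > d are handled by induction on d.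
   If |a| + |b| = d + 1, take c = (d).  Otherwise one of them, say a, has a part
   1, since a partition without parts 1 has length at most d/2.  If b also has a
   part 1, remove both and add a part 1 to the solution for d - 1; if b has a
   part y >= 2, replace it by y - 1, solve for d - 1, and send the part 1 of a to
   the part of c that receives y - 1, which grows by one.
   For m partitions, induct on m: if c' works for a_2, ..., a_m and (c, G, H)
   works for the pair (c', a_1), then over c_j the maps G o r_i contribute
   sum_{G k = j} (c'_k (m - 2) + 1) = c_j (m - 2) + |G^-1(c_j)| parts, and the
   pair condition |G^-1(c_j)| + |H^-1(c_j)| = c_j + 1 completes this to
   c_j (m - 1) + 1. *)

From mathcomp Require Import all_boot zify.
Set Implicit Arguments. Unset Strict Implicit. Unset Printing Implicit Defensive.

Lemma size_le_sumn (s : seq nat) : all (fun x => 0 < x) s -> size s <= sumn s.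
Proof. by elim: s => //= x s IH /andP[+ /IH]; lia. Qed.

Lemma size_le_partition d s : is_partition d s -> size s <= d.
Proof. by case/andP=> /size_le_sumn + /eqP <-. Qed.

Lemma double_size_le_partition d s :
  is_partition d s -> 1 \notin s -> (size s).*2 <= d.
Proof.
case/andP=> + /eqP <-; elim: s => //= x s IH /andP[x_gt0 /IH{}IH].
by rewrite in_cons negb_or => /andP[x_neq1 /IH]; lia.
Qed.

Lemma is_partition_cons1 d s : is_partition d.+1 (1 :: s) = is_partition d s.
Proof. by rewrite /is_partition /= add1n eqSS. Qed.

Lemma is_partition_consSS d x s :
  is_partition d.+1 (x.+2 :: s) = is_partition d (x.+1 :: s).
Proof. by rewrite /is_partition /= addSn eqSS. Qed.

Lemma perm_is_partition d s1 s2 :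
  perm_eq s1 s2 -> is_partition d s1 = is_partition d s2.
Proof. by move=> pe; rewrite /is_partition (perm_sumn pe) (perm_all _ pe). Qed.

(* Refinements are given on part indices by maps [nat -> nat], so that the
   target partition may change along the inductions; [preimage_fiber] relates
   them to the ordinal maps of [is_refinement]. *)
Definition fiber (a : seq nat) (f : nat -> nat) (j : nat) : seq nat :=
  [seq nth 0 a p | p <- iota 0 (size a) & f p == j].

Definition refines (a c : seq nat) (f : nat -> nat) : Prop :=
  (forall p, p < size a -> f p < size c) /\
  (forall j, j < size c -> sumn (fiber a f j) = nth 0 c j).

Lemma sumn_fiber a f j :
  sumn (fiber a f j) = \sum_(p <- iota 0 (size a) | f p == j) nth 0 a p.
Proof. by rewrite sumnE big_map big_filter. Qed.

Lemma size_fiber a f j :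
  size (fiber a f j) = \sum_(p <- iota 0 (size a) | f p == j) 1.
Proof. by rewrite size_map size_filter sum1_count. Qed.

Lemma sum_nth_iota (c : seq nat) : \sum_(j <- iota 0 (size c)) nth 0 c j = sumn c.
Proof. by rewrite -[in RHS](mkseq_nth 0 c) sumnE big_map. Qed.

Lemma fiber_cons x a f j :
  fiber (x :: a) f j =
  (if f 0 == j then [:: x] else [::]) ++ fiber a (f \o succn) j.
Proof.
rewrite /fiber /= -add1n iotaDl filter_map.
by case: (f 0 == j); rewrite /= -map_comp.
Qed.

Lemma fiber_cons_map x a f k j :
  fiber (x :: a) (fun p => if p is p'.+1 then f p' else k) j =
  (if k == j then [:: x] else [::]) ++ fiber a f j.
Proof. exact: fiber_cons. Qed.

Lemma fiber_cons_shift x a f j :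
  fiber (x :: a) (fun p => if p is p'.+1 then (f p').+1 else 0) j =
  if j is j'.+1 then fiber a f j' else [:: x].
Proof. by rewrite fiber_cons; case: j => [|j]; rewrite /fiber /= ?filter_pred0. Qed.

Lemma fiber_id a j : j < size a -> fiber a id j = [:: nth 0 a j].
Proof.
by move=> lt_j_a; rewrite /fiber (filter_pred1_uniq (iota_uniq 0 _)) ?mem_iota.
Qed.

Lemma fiber_const a j : fiber a (fun=> j) j = a.
Proof. by rewrite /fiber eqxx filter_predT -/(mkseq _ _) mkseq_nth. Qed.

Lemma all_fiber (P : pred nat) a f j : all P a -> all P (fiber a f j).
Proof.
move=> /allP Pa; apply/allP => x /mapP[p].
rewrite mem_filter mem_iota => /andP[_ lt_p] ->.
exact/Pa/mem_nth.
Qed.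

Lemma fiber_perm (a a' : seq nat) :
  perm_eq a a' ->
  exists2 s : nat -> nat, (forall p, p < size a -> s p < size a') &
    forall f j, perm_eq (fiber a (f \o s) j) (fiber a' f j).
Proof.
move=> /(perm_iotaP 0)[Is perm_Is ->]; exists (nth 0 Is) => [p|f j].
  rewrite size_map => lt_p; have: nth 0 Is p \in Is by exact: mem_nth.
  by rewrite (perm_mem perm_Is) mem_iota.
suff ->: fiber [seq nth 0 a' i | i <- Is] (f \o nth 0 Is) j =
         [seq nth 0 a' i | i <- Is & f i == j].
  exact/perm_map/perm_filter.
rewrite /fiber size_map -[in RHS](mkseq_nth 0 Is) /mkseq filter_map -map_comp.
apply/eq_in_map => p; rewrite mem_filter mem_iota => /andP[_ lt_p].
by rewrite /= (nth_map 0).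
Qed.

Lemma preimage_fiber (a c : seq nat) (f : nat -> nat)
    (fB : forall k : 'I_(size a), f k < size c) j :
  preimage (fun k => Ordinal (fB k)) j = fiber a f j.
Proof.
rewrite /preimage /fiber -val_enum_ord filter_map -map_comp.
by congr map; apply: eq_filter.
Qed.

Lemma sum_fibers (s : seq nat) n (f w : nat -> nat) :
  {in s, forall p, f p < n} ->
  \sum_(k <- iota 0 n) \sum_(p <- s | f p == k) w p = \sum_(p <- s) w p.
Proof.
move=> fB; under eq_bigr do rewrite big_mkcond; rewrite exchange_big /=.
apply: eq_big_seq => p /fB lt_fp; rewrite -big_mkcond -big_filter.
rewrite (@eq_filter _ _ (pred1 (f p))) => [|k]; last by rewrite /= eq_sym.
by rewrite filter_pred1_uniq ?iota_uniq ?mem_iota // big_seq1.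
Qed.

Lemma sum_fiber_comp (s : seq nat) n (f g w : nat -> nat) j :
  {in s, forall p, f p < n} ->
  \sum_(p <- s | g (f p) == j) w p =
  \sum_(k <- iota 0 n | g k == j) \sum_(p <- s | f p == k) w p.
Proof.
move=> fB; rewrite big_mkcond -(sum_fibers _ fB) [RHS]big_mkcond.
apply: eq_bigr => k _; rewrite (eq_bigr (fun p => if g k == j then w p else 0)).
  by case: ifP; rewrite // big1.
by move=> p /eqP ->.
Qed.

Lemma in_iota_bounded n N (f : nat -> nat) :
  (forall p, p < n -> f p < N) -> {in iota 0 n, forall p, f p < N}.
Proof. by move=> fB p; rewrite mem_iota => /fB. Qed.

Lemma refines_comp a b c f g :
  refines a b f -> refines b c g -> refines a c (g \o f).
Proof.
move=> [fB sum_f] [gB sum_g]; split=> [p /fB /gB //|j lt_j].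
rewrite -sum_g // !sumn_fiber (sum_fiber_comp _ _ _ (in_iota_bounded fB)).
rewrite big_seq_cond [RHS]big_seq_cond; apply: eq_bigr => k /andP[].
by rewrite mem_iota => /= lt_k _; rewrite -sumn_fiber sum_f.
Qed.

Lemma size_fiber_comp (a b : seq nat) f g j :
  (forall p, p < size a -> f p < size b) ->
  size (fiber a (g \o f) j) =
  \sum_(k <- iota 0 (size b) | g k == j) size (fiber a f k).
Proof.
move=> fB; rewrite size_fiber (sum_fiber_comp _ _ _ (in_iota_bounded fB)).
by under [RHS]eq_bigr do rewrite size_fiber.
Qed.

Lemma sum_size_fibers (a c : seq nat) f :
  (forall p, p < size a -> f p < size c) ->
  \sum_(j <- iota 0 (size c)) size (fiber a f j) = size a.
Proof.
move=> fB; under eq_bigr do rewrite size_fiber.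
by rewrite (sum_fibers _ (in_iota_bounded fB)) sum1_size size_iota.
Qed.

Lemma refines_sumn (a c : seq nat) f : refines a c f -> sumn c = sumn a.
Proof.
move=> [fB sum_f]; rewrite -!sum_nth_iota -(sum_fibers _ (in_iota_bounded fB)).
by apply: eq_big_seq => j; rewrite mem_iota => /= lt_j; rewrite -sumn_fiber sum_f.
Qed.

Lemma refines_is_refinement d (a c : seq nat) (f : nat -> nat)
    (fB : forall k : 'I_(size a), f k < size c) :
  is_partition d a -> refines a c f -> is_refinement (fun k => Ordinal (fB k)).
Proof.
case/andP=> pos_a _ [_ sum_f] j; rewrite preimage_fiber /is_partition.
by rewrite all_fiber // sum_f ?eqxx.
Qed.

Definition tight_pair (a b c : seq nat) (f g : nat -> nat) : Prop :=
  [/\ refines a c f, refines b c g &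
      forall j, j < size c -> size (fiber a f j) + size (fiber b g j) = (nth 0 c j).+1].

Lemma tight_pair_sym a b c f g : tight_pair a b c f g -> tight_pair b a c g f.
Proof. by case=> rf rg tight; split=> // j /tight; rewrite addnC. Qed.

Lemma tight_pair_single d a b :
  sumn a = d -> sumn b = d -> size a + size b = d.+1 ->
  tight_pair a b [:: d] (fun=> 0) (fun=> 0).
Proof.
move=> sum_a sum_b size_ab.
by split; [split|split|] => // -[|j] //= _; rewrite !fiber_const.
Qed.

Lemma tight_pair_cons11 a b c f g :
  tight_pair a b c f g ->
  tight_pair (1 :: a) (1 :: b) (1 :: c)
    (fun p => if p is p'.+1 then (f p').+1 else 0)
    (fun p => if p is p'.+1 then (g p').+1 else 0).
Proof.
case=> [[fB sum_f] [gB sum_g] tight].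
split; [split|split|]=> -[|j] // lt_j; rewrite ?fiber_cons_shift //=.
all: by rewrite ?ltnS ?fB ?gB ?sum_f ?sum_g ?tight.
Qed.

Lemma tight_pair_cons1SS a b c f g y :
  tight_pair a (y.+1 :: b) c f g ->
  tight_pair (1 :: a) (y.+2 :: b) (incr_nth c (g 0))
    (fun p => if p is p'.+1 then f p' else g 0) g.
Proof.
case=> [[fB sum_f] [gB sum_g] tight].
have size_c : size (incr_nth c (g 0)) = size c by rewrite size_incr_nth gB.
split; [split|split|]; rewrite size_c.
- by case=> [|p] lt_p; [apply: gB | apply: fB].
- by move=> j lt_j; rewrite fiber_cons sumn_cat sum_f // nth_incr_nth; case: eqP.
- exact: gB.
- move=> j lt_j; have := sum_g j lt_j.
  by rewrite !fiber_cons !sumn_cat nth_incr_nth; case: eqP => /=; lia.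
- move=> j lt_j; have := tight j lt_j.
  by rewrite fiber_cons_map !fiber_cons !size_cat nth_incr_nth; case: eqP => /=; lia.
Qed.

Lemma tight_pair_perm a a' b c f g :
  perm_eq a a' -> tight_pair a' b c f g -> exists f', tight_pair a b c f' g.
Proof.
move=> /fiber_perm[s sB perm_fiber] [[fB sum_f] rg tight].
exists (f \o s); split=> //; first split=> [p /sB /fB //|j lt_j].
  by rewrite (perm_sumn (perm_fiber _ _)) sum_f.
by move=> j lt_j; rewrite (perm_size (perm_fiber _ _)) tight.
Qed.

Lemma tight_pair_exists d a b :
  is_partition d a -> is_partition d b -> d < size a + size b ->
  exists c f g, tight_pair a b c f g.
Proof.
elim: d a b => [|d IH] a b pa pb.
  by have := size_le_partition pa; have := size_le_partition pb; lia.
rewrite leq_eqVlt => /orP[/eqP size_ab|lt_size].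
  exists [:: d.+1], (fun=> 0), (fun=> 0).
  case/andP: pa => _ /eqP sum_a; case/andP: pb => _ /eqP sum_b.
  exact: tight_pair_single sum_a sum_b (esym size_ab).
wlog one_a : a b pa pb lt_size / 1 \in a => [wlog_one|].
  have [|no1_a] := boolP (1 \in a); first exact: wlog_one.
  have [one_b|no1_b] := boolP (1 \in b).
    have [|c [f [g /tight_pair_sym]]] := wlog_one b a pb pa _ one_b.
      by rewrite addnC.
    by exists c, g, f.
  have := double_size_le_partition pa no1_a.
  by have := double_size_le_partition pb no1_b; lia.
have perm_a := perm_to_rem one_a; have size_a := perm_size perm_a.
have pa' : is_partition d (rem 1 a).
  by rewrite -is_partition_cons1 -(perm_is_partition _ perm_a).
suff [c [f [g tp]]] : exists c f g, tight_pair (1 :: rem 1 a) b c f g.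
  by have [f' tp'] := tight_pair_perm perm_a tp; exists c, f', g.
case: b pb lt_size => [|[|[|y]] b] pb lt_size.
- by case/andP: pb.
- by case/andP: pb => /andP[].
- rewrite is_partition_cons1 in pb.
  have [|c [f [g tp]]] := IH _ _ pa' pb; first by rewrite size_a /= in lt_size; lia.
  by exists (1 :: c); do 2 eexists; apply: tight_pair_cons11 tp.
- rewrite is_partition_consSS in pb.
  have [|c [f [g tp]]] := IH _ _ pa' pb; first by rewrite size_a /= in lt_size *; lia.
  by exists (incr_nth c (g 0)); do 2 eexists; apply: tight_pair_cons1SS tp.
Qed.

Definition tight_family m (A : 'I_m -> seq nat) (c : seq nat)
    (F : 'I_m -> nat -> nat) : Prop :=
  (forall i, refines (A i) c (F i)) /\
  (forall j, j < size c ->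
     \sum_(i < m) size (fiber (A i) (F i) j) = nth 0 c j * (m - 1) + 1).

Lemma size_tight_family m A c F :
  @tight_family m A c F -> size c + sumn c * (m - 1) = \sum_(i < m) size (A i).
Proof.
move=> [refF tight_F].
under [RHS]eq_bigr => i _ do rewrite -(sum_size_fibers (refF i).1).
rewrite exchange_big /= -sum_nth_iota big_distrl /= -{1}(size_iota 0 (size c)).
rewrite -sum1_size addnC -big_split /=.
by apply: eq_big_seq => j; rewrite mem_iota => /= /tight_F.
Qed.

Lemma partition_tight_family d m A c F :
  0 < m -> (forall i, is_partition d (A i)) -> @tight_family m A c F ->
  is_partition d c.
Proof.
move=> m_gt0 pA [refF tight_F]; apply/andP; split; last first.
  by rewrite (refines_sumn (refF (Ordinal m_gt0))); case/andP: (pA (Ordinal m_gt0)).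
apply/(all_nthP 0) => j lt_j.
have: \sum_(i < m) size (fiber (A i) (F i) j) <= \sum_(i < m) nth 0 c j.
  apply: leq_sum => i _; rewrite -(refF i).2 //; apply/size_le_sumn/all_fiber.
  by case/andP: (pA i).
by rewrite tight_F // sum_nat_const card_ord; nia.
Qed.

Lemma tight_family_single (A : 'I_1 -> seq nat) :
  tight_family A (A ord0) (fun=> id).
Proof.
have id_fiber j : j < size (A ord0) -> fiber (A ord0) id j = [:: nth 0 (A ord0) j].
  exact: fiber_id.
split=> [i|j lt_j]; last by rewrite big_ord1 /= id_fiber // subnn muln0.
by rewrite ord1; split=> // j lt_j; rewrite id_fiber //= addn0.
Qed.

Lemma tight_family_cons m (A : 'I_m.+2 -> seq nat) c'
    (F' : 'I_m.+1 -> nat -> nat) c G H :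
  tight_family (fun i => A (lift ord0 i)) c' F' ->
  tight_pair c' (A ord0) c G H ->
  exists F, tight_family A c F.
Proof.
move=> [refF' tight_F'] [refG refH tight_GH].
exists (fun i => if unlift ord0 i is Some i' then G \o F' i' else H); split.
  by move=> i; case: unliftP => [i' ->|->] //=; apply: refines_comp refG.
move=> j lt_j; rewrite big_ord_recl unlift_none.
under eq_bigr => i _ do rewrite liftK /= (size_fiber_comp _ _ (refF' i).1).
rewrite exchange_big /= big_seq_cond.
rewrite (eq_bigr (fun k => nth 0 c' k * (m.+1 - 1) + 1)) => [|k /andP[]]; last first.
  by rewrite mem_iota => /= /tight_F'.
rewrite -big_seq_cond big_split /= -big_distrl /= -sumn_fiber -size_fiber.
rewrite (refG.2 j lt_j).
have := tight_GH j lt_j; rewrite !subn1 /=; lia.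
Qed.

Lemma tight_family_exists d m (A : 'I_m.+1 -> seq nat) :
  (forall i, is_partition d (A i)) -> d * m < \sum_(i < m.+1) size (A i) ->
  exists c F, tight_family A c F.
Proof.
elim: m A => [|m IH] A pA.
  by exists (A ord0), (fun=> id); exact: tight_family_single.
rewrite big_ord_recl => lt_size; have size_A0 := size_le_partition (pA ord0).
have [|c' [F' tf']] := IH (fun i => A (lift ord0 i)) (fun i => pA _); first lia.
have pc' := partition_tight_family (ltn0Sn m) (fun i => pA _) tf'.
have := size_tight_family tf'; case/andP: (pc') => _ /eqP -> size_c'.
have [|c [G [H tp]]] := tight_pair_exists pc' (pA ord0).
  by rewrite subSS subn0 in size_c'; nia.
by have [F tf] := tight_family_cons tf' tp; exists c, F.
Qed.

Theorem lemma5p6 (d m : nat) (a : 'I_m -> seq nat) :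
  0 < d -> 0 < m ->
  (forall i, is_partition d (a i)) ->
  d * (m - 1) < \sum_(i < m) size (a i) ->
  exists c : seq nat,
  exists r : forall i : 'I_m, 'I_(size (a i)) -> 'I_(size c),
    [/\ is_partition d c,
        size c = \sum_(i < m) size (a i) - d * (m - 1),
        forall i, is_refinement (r i) &
        forall j : 'I_(size c),
          \sum_(i < m) size (preimage (r i) j) = nth 0 c j * (m - 1) + 1].
Proof.
(* [0 < d] also follows from the size bound, partitions of 0 being empty. *)
move=> _; case: m a => // m a _ pa lt_size.
rewrite subSS subn0 in lt_size.
have [c [F tf]] := tight_family_exists pa lt_size.
have pc := partition_tight_family (ltn0Sn m) pa tf.
have size_c := size_tight_family tf; case: tf => refF tight_F.
have fB i (k : 'I_(size (a i))) : F i k < size c := (refF i).1 k (ltn_ord k).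
exists c, (fun i k => Ordinal (fB i k)); split=> //.
- by case/andP: pc size_c => _ /eqP ->; lia.
- by move=> i; apply: refines_is_refinement (pa i) (refF i).
- by move=> j; under eq_bigr do rewrite preimage_fiber; apply: tight_F.
Qed.
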